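(* Any amendment strategy is outcome-equivalent to the insertion-sort strategy.
   Context: Let $\mathcal{X}=\{1,\dots,n\}$, labelled so that the chair's preference (a ranking) is $1\succ\cdots\succ n$. A proto-ranking is an irreflexive transitive relation on $\mathcal{X}$; a ranking is a total proto-ranking; a tournament is a total asymmetric relation on $\mathcal{X}$. Interaction: given a tournament $\mathrel{W}$, start from $R_0=\varnothing$; in each period with $R_{t-1}$ not total the chair offers a pair $\{x,y\}$ unranked by $R_{t-1}$, the winner is $x$ if $x\mathrel{W}y$ and $y$ otherwise, and $R_t$ is the transitive closure of $R_{t-1}\cup\{(\text{winner},\text{loser})\}$; stop when $R_t$ is total. A strategy assigns to each non-terminal history (sequence of (winner, loser) pairs) a pair unranked at it; its outcome under $\mathrel{W}$ is the final ranking. Two strategies are outcome-equivalent if they have the same outcome under every tournament. Insertion-sort strategy: at a history with current proto-ranking $R$, let $L(z)=\{w: z\succ w,\ \text{neither } zRw\text{ nor } wRz\}$; let $x$ be the $\succ$-worst alternative with $L(x)\ne\varnothing$ and $y$ the $R$-highest element of $L(x)$; offer $\{x,y\}$. Amendment algorithm on a set $\{a_1\succ\cdots\succ a_m\}$: pit $a_{m-1}$ against $a_m$, then $a_{m-2}$ against the winner, then $a_{m-3}$ against the previous winner, etc.; the winner of the last round is the final winner. Recursive-amendment algorithm: run the amendment algorithm on $\mathcal{X}$ to get final winner $y_1$; run it on $\mathcal{X}\setminus\{y_1\}$ to get $y_2$; on $\mathcal{X}\setminus\{y_1,y_2\}$ to get $y_3$; and so on, where whenever the algorithm demands a vote on a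 pair already ranked as $xRy$ no vote is held and it is treated as if $x$ had won. An amendment strategy is any strategy whose behaviour along every history generated by it and some tournament coincides with the recursive-amendment algorithm. *)

From mathcomp Require Import all_boot.
Set Implicit Arguments. Unset Strict Implicit. Unset Printing Implicit Defensive.

Section Agenda.
Variable n : nat.
(* Alternatives: 'I_n ; the chair's ranking is  i ≻ j  iff  i < j  (as naturals). *)
Notation A := 'I_n.

(* A history: sequence of (winner, loser) pairs. *)
Definition history := seq (A * A).

Definition hrel (h : history) : rel A := fun x y => (x, y) \in h.

(* Proto-ranking generated by a history: transitive closure of its pairs. *)
Definition tc (h : history) : rel A :=
  fun x y => [exists z, hrel h x z && connect (hrel h) z y].

Definition total_rel (R : rel A) : bool :=
  [forall x, forall y, (x != y) ==> (R x y || R y x)].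

Definition unranked (R : rel A) (x y : A) : bool :=
  [&& x != y, ~~ R x y & ~~ R y x].

Definition tournament (W : rel A) : Prop :=
  (forall x y, x != y -> W x y || W y x) /\ (forall x y, W x y -> ~~ W y x).

(* Outcome of a vote on the (unordered) pair {p.1, p.2}: (winner, loser). *)
Definition play (W : rel A) (p : A * A) : A * A :=
  if W p.1 p.2 then p else (p.2, p.1).

Fixpoint is_hist_aux (pre rest : history) : bool :=
  match rest with
  | [::] => true
  | p :: r => unranked (tc pre) p.1 p.2 && is_hist_aux (rcons pre p) r
  end.
Definition is_history (h : history) : bool := is_hist_aux [::] h.

(* A strategy offers a pair (p.1, p.2), read as the unordered pair {p.1,p.2}. *)
Definition strategy := history -> A * A.

Definition is_strategy (s : strategy) : Prop :=
  forall h, is_history h -> ~~ total_rel (tc h) ->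
    unranked (tc h) (s h).1 (s h).2.

Fixpoint run (s : strategy) (W : rel A) (k : nat) : history :=
  match k with
  | 0 => [::]
  | k'.+1 => let h := run s W k' in
             if total_rel (tc h) then h else rcons h (play W (s h))
  end.

(* n*n periods suffice for any strategy to reach a total ranking. *)
Definition outcome (s : strategy) (W : rel A) : rel A := tc (run s W (n * n)).

Definition outcome_equiv (s s' : strategy) : Prop :=
  forall W, tournament W -> outcome s W =2 outcome s' W.

(* Insertion-sort strategy (d is a dummy default, never used at
   non-terminal histories reached in play). *)
Definition Lset (R : rel A) (z : A) : pred A :=
  [pred w : A | (z < w) && unranked R z w].

Definition insertion_sort (d : A) : strategy := fun h =>
  let R := tc h in
  match [pick x | ~~ pred0b (Lset R x) &
                  [forall x', ~~ pred0b (Lset R x') ==> (x' <= x)]] with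
  | Some x =>
      match [pick y in Lset R x |
               [forall w in Lset R x, (w != y) ==> R y w]] with
      | Some y => (x, y)
      | None => (d, d)
      end
  | None => (d, d)
  end.

Definition amend_step (W : rel A) (st : A * history) (a : A) : A * history :=
  let: (c, h) := st in
  let R := tc h in
  if R a c then (a, h)
  else if R c a then (c, h)
  else let p := play W (a, c) in (p.1, rcons h p).

(* Amendment algorithm on xs = [a_1; ...; a_m] (listed in ≻ order):
   a_{m-1} vs a_m, then a_{m-2} vs the winner, etc. *)
Definition amend (W : rel A) (h : history) (xs : seq A) : option (A * history) :=
  match rev xs with
  | [::] => None
  | c :: rest => Some (foldl (amend_step W) (c, h) rest)
  end.

Fixpoint rec_amend_aux (W : rel A) (k : nat) (X : seq A) (h : history) : history :=
  match k with
  | 0 => h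
  | k'.+1 => match amend W h X with
             | None => h
             | Some (y, h') => rec_amend_aux W k' (rem y X) h'
             end
  end.

Definition rec_amend (W : rel A) : history := rec_amend_aux W n (enum A) [::].

Definition amendment_strategy (s : strategy) : Prop :=
  is_strategy s /\ forall W, tournament W -> run s W (n * n) = rec_amend W.

End Agenda.

(* Let pi be the ranking obtained by inserting the alternatives n-1, ..., 1, 0
   (from the chair's worst to best) one at a time into a list, each immediately
   above the highest-placed alternative it beats.  If x is better than c for the
   chair and every alternative worse than x that pi puts above c is also above x,
   then the vote between x and c comes out as in pi.  Every vote held by the
   recursive-amendment algorithm satisfies this condition, because the running
   winner is the pi-highest of the alternatives examined so far and earlier
   winners lie pi-above all remaining alternatives; every vote offered by
   insertion sort does too, because the alternatives worse than the offered x
   are already ranked among themselves.  So both strategies only record pairs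
   ordered as in pi.  Each period ranks a new pair, hence after n*n periods the
   closure is total, and a total closure of pairs ordered as in pi is pi. *)

From mathcomp Require Import all_boot.
Set Implicit Arguments. Unset Strict Implicit. Unset Printing Implicit Defensive.

Section Before.
Variable T : eqType.

Definition before (s : seq T) : rel T := fun u v => index u s < index v s.

Lemma before_irr s : irreflexive (before s).
Proof. by move=> u; rewrite /before ltnn. Qed.

Lemma before_trans s : transitive (before s).
Proof. by move=> v u w; apply: ltn_trans. Qed.

Lemma before_total s u v : u \in s -> v \in s -> u != v -> before s u v || before s v u.
Proof.
move=> us vs; apply: contra_neqT; rewrite /before negb_or -!leqNgt => /andP[vu uv].
by apply: (index_inj u us vs); apply/eqP; rewrite eqn_leq uv vu.
Qed.

Lemma before_meml s u v : before s u v -> u \in s.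
Proof. by rewrite -index_mem => /leq_trans; apply; apply: index_size. Qed.

Lemma before_cons y s u v : u != y -> v != y -> before (y :: s) u v = before s u v.
Proof. by move=> uy vy; rewrite /before /= !(eq_sym y) (negbTE uy) (negbTE vy). Qed.

Lemma before_head y s v : before (y :: s) y v = (v != y).
Proof. by rewrite /before /= eqxx eq_sym; case: eqP. Qed.

End Before.

Section Insertion.
Variables (T : eqType) (W : rel T).

Fixpoint ins (x : T) (L : seq T) : seq T :=
  if L is y :: L' then (if W x y then x :: L else y :: ins x L') else [:: x].

Lemma perm_ins x L : perm_eq (ins x L) (x :: L).
Proof.
elim: L => [|y L IH] //=; case: (W x y) => //.
by rewrite perm_sym (perm_catCA [:: x] [:: y] L) /= perm_cons perm_sym.
Qed.

Lemma perm_foldr_ins L s : perm_eq (foldr ins L s) (s ++ L).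
Proof.
elim: s => [|x s IH] //=.
by rewrite (perm_trans (perm_ins _ _)) // perm_cons.
Qed.

Lemma before_ins x L u v : u != x -> v != x -> before (ins x L) u v = before L u v.
Proof.
move=> ux vx; elim: L => [|y L IH] /=.
  by rewrite before_cons // /before.
case: (W x y); first by rewrite before_cons.
have [->|uy] := eqVneq u y; first by rewrite !before_head.
have [->|vy] := eqVneq v y; first by rewrite /before /= eqxx eq_sym (negbTE uy).
by rewrite !before_cons.
Qed.

Lemma before_foldr_ins L pre u v : u \notin pre -> v \notin pre ->
  before (foldr ins L pre) u v = before L u v.
Proof.
elim: pre => [|x pre IH] //=; rewrite !inE !negb_or => /andP[ux upre] /andP[vx vpre].
by rewrite before_ins // IH.
Qed.

Lemma ins_vote x c L : x \notin L -> uniq L -> c \in L ->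
  (forall d, before L d c -> before (ins x L) d x) ->
  W x c = before (ins x L) x c.
Proof.
elim: L => //= y L IH; rewrite inE negb_or => /andP[xy xL] /andP[yL uL].
rewrite inE; have [-> _ above|cy /= cL above] := eqVneq c y.
  case: (W x y); first by rewrite before_head eq_sym.
  by rewrite /before /= eqxx.
have Wxy : W x y = false.
  apply/negP => Wxy; have := above y; rewrite before_head cy Wxy => /(_ isT).
  by rewrite /before /= !eqxx ltn0.
rewrite Wxy before_cons // in above *; apply: IH => // d dc.
have dy : d != y by apply: contraNneq yL => <-; apply: before_meml dc.
by have := above d; rewrite !before_cons // => ->.
Qed.

End Insertion.

Section Closure.
Variable n : nat.
Local Notation A := 'I_n.
Implicit Types (h : history n) (Q : rel A).

Definition respects Q h := forall p, p \in h -> Q p.1 p.2.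

Lemma respects_rcons Q h p : respects Q h -> Q p.1 p.2 -> respects Q (rcons h p).
Proof. by move=> hQ pQ q; rewrite mem_rcons inE => /predU1P[->|/hQ]. Qed.

Lemma tc_trans h : transitive (tc h).
Proof.
move=> y x z /existsP[a /andP[xa ay]] /existsP[b /andP[yb bz]].
apply/existsP; exists a; rewrite xa /=.
by apply: connect_trans ay _; apply: connect_trans bz; apply: connect1.
Qed.

Lemma tc_sub Q h : transitive Q -> respects Q h -> subrel (tc h) Q.
Proof.
move=> trQ hQ x y /existsP[z /andP[/(hQ (x, z)) xz /connectP[p zp ->]]].
elim: p z xz zp => //= w p IH z xz /andP[zw wp].
exact: IH (trQ _ _ _ xz (hQ (z, w) zw)) wp.
Qed.

Lemma tc_irr Q h : transitive Q -> irreflexive Q -> respects Q h -> irreflexive (tc h).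
Proof. by move=> trQ irrQ hQ x; apply/negbTE/negP => /(tc_sub trQ hQ); rewrite irrQ. Qed.

Lemma tc_mono h h' : {subset h <= h'} -> subrel (tc h) (tc h').
Proof.
move=> hh' x y /existsP[z /andP[xz zy]]; apply/existsP; exists z.
by rewrite /hrel hh' //=; apply: connect_sub zy => a b ab; apply/connect1/hh'.
Qed.

Lemma tc_rcons h p : tc (rcons h p) p.1 p.2.
Proof.
by apply/existsP; exists p.2; rewrite /hrel mem_rcons -surjective_pairing mem_head connect0.
Qed.

Lemma total_tc Q h : transitive Q -> irreflexive Q -> respects Q h ->
  total_rel (tc h) -> tc h =2 Q.
Proof.
move=> trQ irrQ hQ tot x y; apply/idP/idP => [|xy]; first exact: tc_sub.
have neq_xy : x != y by apply: contraTneq xy => ->; rewrite irrQ.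
move: tot => /forallP/(_ x)/forallP/(_ y)/implyP/(_ neq_xy)/orP[//|/(tc_sub trQ hQ) yx].
by have := trQ _ _ _ xy yx; rewrite irrQ.
Qed.

Definition ranked_pairs h := [set p : A * A | tc h p.1 p.2].

Lemma card_ranked_play W h p : unranked (tc h) p.1 p.2 ->
  #|ranked_pairs h| < #|ranked_pairs (rcons h (play W p))|.
Proof.
move=> /and3P[_ np1 np2]; apply/proper_card/properP; split.
  apply/subsetP => q; rewrite !inE; apply: tc_mono => r.
  by rewrite mem_rcons inE => ->; rewrite orbT.
exists (play W p); rewrite !inE ?tc_rcons //.
by rewrite /play; case: (W _ _).
Qed.

End Closure.

Section Runs.
Variable n : nat.
Local Notation A := 'I_n.
Implicit Types (s : strategy n) (W Q : rel A).

Definition offers_unranked s W := forall k, let h := run s W k in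
  ~~ total_rel (tc h) -> unranked (tc h) (s h).1 (s h).2.

Lemma run_total s W Q : transitive Q -> irreflexive Q -> offers_unranked s W ->
  respects Q (run s W (n * n)) -> total_rel (tc (run s W (n * n))).
Proof.
move=> trQ irrQ offer hQ.
have grow k : total_rel (tc (run s W k)) || (k <= #|ranked_pairs (run s W k)|).
  elim: k => [|k IH] /=; first by rewrite orbT.
  case: ifP => [-> //|/negbT nt] /=.
  rewrite (negbTE nt) /= in IH; apply/orP; right; apply: leq_ltn_trans IH _.
  exact: card_ranked_play (offer _ nt).
apply: contraTT (grow (n * n)) => nt; rewrite negb_or nt -ltnNge /=.
have /forallPn[x _] := nt.
apply: (@leq_trans #|[set: A * A]|); last by rewrite cardsT card_prod card_ord.
apply/proper_card/properP; split; first exact: subsetT.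
by exists (x, x); rewrite !inE //= (tc_irr trQ irrQ hQ).
Qed.

Lemma outcome_eq s W Q : transitive Q -> irreflexive Q -> offers_unranked s W ->
  respects Q (run s W (n * n)) -> outcome s W =2 Q.
Proof.
by move=> trQ irrQ offer hQ; apply: total_tc trQ irrQ hQ (run_total trQ irrQ offer hQ).
Qed.

Lemma is_hist_rcons (pre r : history n) p :
  is_hist_aux pre (rcons r p) = is_hist_aux pre r && unranked (tc (pre ++ r)) p.1 p.2.
Proof.
elim: r pre => [|q r IH] pre /=; first by rewrite cats0 andbT.
by rewrite IH cat_rcons andbA.
Qed.

Lemma unranked_play (R : rel A) W p : unranked R p.1 p.2 ->
  unranked R (play W p).1 (play W p).2.
Proof.
rewrite /play /unranked; case: (W _ _) => //= /and3P[? ? ?].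
by rewrite eq_sym; apply/and3P.
Qed.

Lemma is_history_run s W k : is_strategy s -> is_history (run s W k).
Proof.
move=> strat; elim: k => [|k IH] //=; case: ifP => // /negbT nt.
rewrite /is_history is_hist_rcons -/(is_history _) IH /=.
exact: unranked_play (strat _ IH nt).
Qed.

Lemma strategy_offers_unranked s W : is_strategy s -> offers_unranked s W.
Proof. by move=> strat k; apply/strat/is_history_run. Qed.

End Runs.

Section Ranking.
Variable n : nat.
Local Notation A := 'I_n.
Variable W : rel A.

Definition chair : rel A := fun u v => u < v.

Lemma pairwise_chair_enum : pairwise chair (enum A).
Proof.
rewrite -(pairwise_map val ltn) val_enum_ord -sorted_pairwise ?iota_ltn_sorted //.
exact: ltn_trans.
Qed.

Definition insertion_ranking : seq A := foldr (ins W) [::] (enum A).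

Local Notation Pi := (before insertion_ranking).

Lemma mem_insertion_ranking u : u \in insertion_ranking.
Proof. by rewrite (perm_mem (perm_foldr_ins _ _ _)) cats0 mem_enum. Qed.

Lemma insertion_ranking_total u v : u != v -> Pi u v || Pi v u.
Proof. by apply: before_total; apply: mem_insertion_ranking. Qed.

Lemma enum_split (x : A) : exists pre post,
  [/\ enum A = pre ++ x :: post, {in pre, forall u : A, u < x}
    & forall u : A, (u \in post) = (x < u)].
Proof.
move: pairwise_chair_enum (mem_enum A).
have /splitPr[pre post] : x \in enum A by rewrite mem_enum.
rewrite pairwise_cat /= => /and4P[/allrelP lt_pre _ /allP lt_post _] Emem.
have pre_lt : {in pre, forall u : A, u < x} by move=> u /lt_pre; apply; apply: mem_head.
exists pre, post; split=> // u; apply/idP/idP => [/lt_post//|xu].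
move: (Emem u); rewrite inE mem_cat inE.
case/or3P=> [/pre_lt ux|/eqP ux|//]; last by rewrite ux ltnn in xu.
by have := ltn_trans ux xu; rewrite ltnn.
Qed.

Lemma insertion_ranking_vote (x c : A) : x < c ->
  (forall d : A, x < d -> Pi d c -> Pi d x) -> W x c = Pi x c.
Proof.
move=> xc above; have [pre [post [Eenum pre_lt post_gt]]] := enum_split x.
have /andP[xpost upost] : uniq (x :: post).
  by move: (enum_uniq A); rewrite Eenum cat_uniq => /and3P[].
set M := foldr (ins W) [::] post.
have memM (u : A) : (u \in M) = (x < u) by rewrite (perm_mem (perm_foldr_ins _ _ _)) cats0.
have Pi_above (u v : A) : x <= u -> x <= v -> Pi u v = before (ins W x M) u v.
  move=> xu xv; rewrite /insertion_ranking Eenum foldr_cat before_foldr_ins //.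
    by apply: contraTN xu => /pre_lt; rewrite -ltnNge.
  by apply: contraTN xv => /pre_lt; rewrite -ltnNge.
have neq_x (u : A) : x < u -> u != x by apply: contraTneq => ->; rewrite ltnn.
rewrite Pi_above ?(ltnW xc) //; apply: ins_vote.
- by rewrite memM ltnn.
- by rewrite (perm_uniq (perm_foldr_ins _ _ _)) cats0.
- by rewrite memM.
move=> d dc; have xd : x < d by rewrite -memM; apply: before_meml dc.
rewrite -Pi_above ?(ltnW xd) //; apply: above => //.
by rewrite Pi_above ?(ltnW xd) ?(ltnW xc) // before_ins ?neq_x.
Qed.

Lemma insertion_ranking_play (x c : A) : x < c ->
  (forall d : A, x < d -> Pi d c -> Pi d x) -> Pi (play W (x, c)).1 (play W (x, c)).2.
Proof.
move=> xc above; have := insertion_ranking_vote xc above; rewrite /play /=.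
case: (W x c) => [<- //|/esym Pxc] /=.
have neq_xc : x != c by apply: contraTneq xc => ->; rewrite ltnn.
by have := insertion_ranking_total neq_xc; rewrite Pxc.
Qed.

End Ranking.

Arguments chair {n}.

Section Amendment.
Variable n : nat.
Local Notation A := 'I_n.
Variable W : rel A.
Local Notation Pi := (before (insertion_ranking W)).
Implicit Types (h : history n) (rs X Y : seq A).

Definition ranking_top (c : A) Y := c \in Y /\ forall y, y \in Y -> y != c -> Pi c y.

Definition ranking_final X := forall z x, z \notin X -> x \in X -> Pi z x.

Lemma ranking_top_cons (a c w l : A) Y : ranking_top c Y ->
  (w, l) \in [:: (a, c); (c, a)] -> Pi w l -> ranking_top w (a :: Y).
Proof.
case=> cY top; rewrite !inE => /orP[] /eqP[-> ->] Pwl.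
  split=> [|y]; first exact: mem_head.
  rewrite inE => /predU1P[->|yY]; first by rewrite eqxx.
  have [->|yc] := eqVneq y c; first by [].
  by move=> _; apply: before_trans Pwl (top y yY yc).
split=> [|y]; first by rewrite inE cY orbT.
by rewrite inE => /predU1P[->|/top].
Qed.

Lemma amend_step_top (st : A * history n) (a : A) Y : a < st.1 ->
  ranking_top st.1 Y -> respects Pi st.2 ->
  (forall d : A, a < d -> d \notin Y -> Pi d a) ->
  ranking_top (amend_step W st a).1 (a :: Y) /\ respects Pi (amend_step W st a).2.
Proof.
case: st => c h /= ac topc hPi above.
have Pi_tc := tc_sub (@before_trans _ _) hPi.
rewrite /amend_step; case: ifP => [/Pi_tc Pac|_].
  by split=> //; apply: ranking_top_cons topc _ Pac; rewrite mem_head.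
case: ifP => [/Pi_tc Pca|_].
  by split=> //; apply: ranking_top_cons topc _ Pca; rewrite !inE eqxx orbT.
have Pplay : Pi (play W (a, c)).1 (play W (a, c)).2.
  apply: insertion_ranking_play => // d ad Pdc.
  have [dY|] := boolP (d \in Y); last exact: above.
  have [dc|ndc] := eqVneq d c; first by rewrite dc before_irr in Pdc.
  by have := before_trans Pdc (topc.2 d dY ndc); rewrite before_irr.
split; last exact: respects_rcons.
apply: ranking_top_cons topc _ Pplay.
by rewrite /play; case: (W a c); rewrite !inE eqxx ?orbT.
Qed.

Lemma foldl_amend_step_top rs Y (st : A * history n) :
  pairwise chair (rev rs ++ Y) -> ranking_final (rev rs ++ Y) ->
  ranking_top st.1 Y -> respects Pi st.2 ->
  ranking_top (foldl (amend_step W) st rs).1 (rev rs ++ Y) /\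
  respects Pi (foldl (amend_step W) st rs).2.
Proof.
elim: rs Y st => [|a rs IH] Y st //=; rewrite rev_cons cat_rcons => sortX finalX topst hPi.
move: (sortX); rewrite pairwise_cat /= => /and4P[/allrelP lt_rs _ /allP lt_Y _].
have a_lt_rs d : d \in rev rs -> d < a by move/lt_rs; apply; apply: mem_head.
have [topst' hPi'] : ranking_top (amend_step W st a).1 (a :: Y) /\
                     respects Pi (amend_step W st a).2.
  apply: amend_step_top => //; first exact/lt_Y/topst.1.
  move=> d ad dY; apply: finalX; last by rewrite mem_cat mem_head orbT.
  rewrite mem_cat inE (negbTE dY) orbF negb_or; apply/andP; split.
    by apply: contraTN ad => /a_lt_rs /ltnW; rewrite leqNgt.
  by apply: contraTneq ad => ->; rewrite ltnn.
exact: IH.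
Qed.

Lemma amend_top X h y h' : pairwise chair X -> ranking_final X -> respects Pi h ->
  amend W h X = Some (y, h') -> ranking_top y X /\ respects Pi h'.
Proof.
case/lastP: X => [//|pre c] sortX finalX hPi; rewrite /amend rev_rcons => -[E].
have := @foldl_amend_step_top (rev pre) [:: c] (c, h).
rewrite revK cats1 E; apply=> //; split=> [|y']; first exact: mem_head.
by rewrite inE => /eqP->; rewrite eqxx.
Qed.

Lemma rec_amend_aux_respects k X h : pairwise chair X -> ranking_final X ->
  respects Pi h -> respects Pi (rec_amend_aux W k X h).
Proof.
elim: k X h => [|k IH] X h //= sortX finalX hPi.
case E: (amend W h X) => [[y h']|//].
have [[yX top] hPi'] := amend_top sortX finalX hPi E.
have uX : uniq X by apply: pairwise_uniq sortX => u; apply: ltnn.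
apply: IH => //; first exact: subseq_pairwise (rem_subseq _ _) sortX.
move=> z x; rewrite !(mem_rem_uniq _ uX) !inE negb_and negbK.
by case/predU1P=> [->|zX] /andP[xy xX]; [apply: top | apply: finalX].
Qed.

Lemma rec_amend_respects : respects Pi (rec_amend W).
Proof.
apply: rec_amend_aux_respects => //; first exact: pairwise_chair_enum.
by move=> z x; rewrite mem_enum.
Qed.

End Amendment.

Section InsertionSortStep.
Variable n : nat.
Local Notation A := 'I_n.
Variables (W : rel A) (h : history n).
Local Notation Pi := (before (insertion_ranking W)).
Hypothesis hPi : respects Pi h.
Local Notation R := (tc h).

Definition Lset_max (x : A) := forall x', ~~ pred0b (Lset R x') -> x' <= x.

Lemma Lset_exists : ~~ total_rel R -> exists x, ~~ pred0b (Lset R x).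
Proof.
case/forallPn=> u /forallPn[v]; rewrite negb_imply negb_or => /and3P[uv nuv nvu].
have [uv'|vu'|/val_inj eq_uv] := ltngtP u v; last by rewrite eq_uv eqxx in uv.
  by exists u; apply/pred0Pn; exists v; rewrite /Lset /= uv' /unranked uv nuv nvu.
by exists v; apply/pred0Pn; exists u; rewrite /Lset /= vu' /unranked eq_sym uv nuv nvu.
Qed.

Lemma Lset_max_comparable (x u v : A) : Lset_max x -> x < u -> x < v -> u != v ->
  R u v || R v u.
Proof.
move=> xmax; wlog uv : u v / u < v => [wlog xu xv neq_uv|xu _ neq_uv].
  have [uv|vu|/val_inj eq_uv] := ltngtP u v; last by rewrite eq_uv eqxx in neq_uv.
    exact: wlog.
  by rewrite orbC; apply: wlog; rewrite // eq_sym.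
apply: contraT; rewrite negb_or => /andP[nuv nvu].
have /xmax : ~~ pred0b (Lset R u).
  by apply/pred0Pn; exists v; rewrite /Lset /= uv /unranked neq_uv nuv nvu.
by rewrite leqNgt xu.
Qed.

Lemma Lset_top x : Lset_max x -> ~~ pred0b (Lset R x) ->
  exists2 y, y \in Lset R x & forall w, w \in Lset R x -> w != y -> R y w.
Proof.
move=> xmax /pred0Pn[y0 Ly0].
case: (arg_minnP (fun w => index w (insertion_ranking W)) Ly0) => y Ly ymin.
exists y => // w Lw wy.
move: (Ly) (Lw); rewrite !inE => /andP[xy _] /andP[xw _].
have yw : y != w by rewrite eq_sym.
case/orP: (Lset_max_comparable xmax xy xw yw) => // /(tc_sub (@before_trans _ _) hPi).
by rewrite /before ltnNge ymin.
Qed.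

Lemma insertion_sort_spec (d : A) : ~~ total_rel R ->
  exists x y, [/\ insertion_sort d h = (x, y), Lset_max x, y \in Lset R x
                & forall w, w \in Lset R x -> w != y -> R y w].
Proof.
move=> nt; rewrite /insertion_sort.
case: pickP => [x /andP[Lx /forallP xmax] | none]; last first.
  have [x0 Lx0] := Lset_exists nt.
  case: (@arg_maxnP _ x0 (fun i => ~~ pred0b (Lset R i)) val Lx0) => x Lx xmax.
  suff xtop : [forall x', ~~ pred0b (Lset R x') ==> (x' <= x)].
    by move: (none x); rewrite /= Lx xtop.
  by apply/forallP => x'; apply/implyP/xmax.
have {}xmax : Lset_max x by move=> x'; apply/implyP/xmax.
case: pickP => [y /andP[Ly /forall_inP ytop] | none].
  by exists x, y; split=> // w /ytop/implyP.
have [y Ly ytop] := Lset_top xmax Lx.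
suff ytop' : [forall w in Lset R x, (w != y) ==> R y w].
  by move: (none y); rewrite /= Ly ytop'.
by apply/forall_inP => w wL; apply/implyP; apply: ytop.
Qed.

Lemma insertion_sort_step (d : A) : ~~ total_rel R ->
  let p := insertion_sort d h in unranked R p.1 p.2 && Pi (play W p).1 (play W p).2.
Proof.
move=> nt; have [x [y [-> xmax Ly ytop]]] := insertion_sort_spec d nt.
move: (Ly); rewrite inE /= => /andP[xy unr_xy]; rewrite /= unr_xy /=.
have Pi_tc := tc_sub (@before_trans _ _) hPi.
apply: insertion_ranking_play => // e xe Pey.
have ey : e != y by apply: contraTneq Pey => ->; rewrite before_irr.
have Rey : R e y.
  case/orP: (Lset_max_comparable xmax xe xy ey) => // /Pi_tc Pye.
  by have := before_trans Pey Pye; rewrite before_irr.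
have [Le|nLe] := boolP (e \in Lset R x).
  by have := before_trans Pey (Pi_tc _ _ (ytop e Le ey)); rewrite before_irr.
have neq_xe : x != e by apply: contraTneq xe => ->; rewrite ltnn.
have : ~~ unranked R x e by apply: contra nLe => unr; rewrite inE /= xe.
rewrite /unranked neq_xe andTb negb_and !negbK => /orP[Rxe|/Pi_tc //].
by case/and3P: unr_xy => _ /negP[]; apply: tc_trans Rxe Rey.
Qed.

End InsertionSortStep.

Lemma insertion_sort_run_respects n (W : rel 'I_n) d k :
  respects (before (insertion_ranking W)) (run (insertion_sort d) W k).
Proof.
elim: k => [|k IH] //=; case: ifP => // /negbT nt.
by case/andP: (insertion_sort_step IH d nt) => _; apply: respects_rcons.
Qed.

Lemma insertion_sort_offers_unranked n (W : rel 'I_n) d :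
  offers_unranked (insertion_sort d) W.
Proof.
move=> k /= nt.
by case/andP: (insertion_sort_step (@insertion_sort_run_respects _ W d k) d nt).
Qed.

Theorem proposition3 (n : nat) (hn : 0 < n) (s : strategy n) :
  amendment_strategy s -> outcome_equiv s (insertion_sort (Ordinal hn)).
Proof.
case=> strat run_eq W tourW x y.
have trPi := @before_trans _ (insertion_ranking W).
have irrPi := @before_irr _ (insertion_ranking W).
have amendPi : respects (before (insertion_ranking W)) (run s W (n * n)).
  by rewrite run_eq //; apply: rec_amend_respects.
rewrite (outcome_eq trPi irrPi (strategy_offers_unranked strat) amendPi).
rewrite (outcome_eq trPi irrPi) //.
  exact: insertion_sort_offers_unranked.
exact: insertion_sort_run_respects.
Qed.
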